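(* Let $T>0$, $0<\eta<T$, $0<\alpha <\frac{2T}{\eta ^{2}}$ and $0\leq \beta < \frac{2T-\alpha \eta ^{2}}{\alpha \eta ^{2}-2\eta +2T}$. If $y\in C([0,T],[0,\infty))$, then the unique solution $u$ of \[ u''(t)+y(t)=0,\ t\in(0,T),\qquad u(0)=\beta u(\eta),\quad u(T)=\alpha\int_0^\eta u(s)\,ds \] satisfies $u(t)\geq 0$ for all $t\in [0,T]$.
   Context: A solution is a function $u\in C^2([0,T])$ satisfying the differential equation on $(0,T)$ and the two boundary conditions; under the stated hypotheses this problem has a unique solution. *)

From Stdlib Require Import Reals.
From Coquelicot Require Import Coquelicot.
Open Scope R_scope.

Definition cont_within (a b : R) (f : R -> R) (t : R) : Prop :=
  filterlim f (within (fun s => a <= s <= b) (locally t)) (locally (f t)).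

Definition deriv_within (a b : R) (f : R -> R) (t l : R) : Prop :=
  filterlim (fun h => (f (t + h) - f t) / h)
    (within (fun h => h <> 0 /\ a <= t + h <= b) (locally 0)) (locally l).

Definition C0_on (a b : R) (f : R -> R) : Prop :=
  forall t, a <= t <= b -> cont_within a b f t.

Definition C2_on_with (a b : R) (u u1 u2 : R -> R) : Prop :=
  (forall t, a <= t <= b -> deriv_within a b u t (u1 t)) /\
  (forall t, a <= t <= b -> deriv_within a b u1 t (u2 t)) /\
  C0_on a b u2.

(* The equation makes [u] concave, so [u] lies above the chord joining
   [(0, u 0)] and [(T, u T)]; in particular [u eta] and [RInt u 0 eta] are
   bounded below by the chord's value and integral.  Feeding these bounds
   into the two boundary conditions yields a linear inequality
   [(2T - alpha eta^2 - beta (alpha eta^2 - 2 eta + 2T)) u 0 >= 0] whose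
   coefficient is positive exactly under the hypothesis on [beta]; hence
   [u 0 >= 0], then [u T >= 0], and the chord is nonnegative. *)
From Stdlib Require Import Reals Lra.
From Coquelicot Require Import Coquelicot.
Open Scope R_scope.

Section DerivWithin.

Variables (a b : R) (f : R -> R).

Lemma deriv_within_eps (t l : R) : deriv_within a b f t l ->
  forall eps, 0 < eps -> exists d, 0 < d /\
    forall h, h <> 0 -> a <= t + h <= b -> Rabs h < d ->
      Rabs ((f (t + h) - f t) / h - l) < eps.
Proof.
  intros Hf eps Heps.
  destruct (proj1 (filterlim_locally _ _) Hf (mkposreal eps Heps)) as [d Hd].
  exists d; split; [apply cond_pos |].
  intros h Hh Hab Hd_h; apply (Hd h); [| now split].
  change (Rabs (h - 0) < d); now rewrite Rminus_0_r.
Qed.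

Lemma deriv_within_continuous (t l : R) : deriv_within a b f t l ->
  forall eps, 0 < eps -> exists d, 0 < d /\
    forall s, a <= s <= b -> Rabs (s - t) < d -> Rabs (f s - f t) < eps.
Proof.
  intros Hf eps Heps.
  destruct (deriv_within_eps t l Hf 1 Rlt_0_1) as [d1 [Hd1 Hq]].
  pose proof (Rabs_pos l) as Hl.
  exists (Rmin d1 (eps / (Rabs l + 1))); split.
  { apply Rmin_glb_lt; [lra | apply Rdiv_lt_0_compat; lra]. }
  intros s Hs Hst.
  destruct (Req_dec s t) as [-> | Hne].
  { rewrite Rminus_diag, Rabs_R0; lra. }
  set (h := s - t) in Hst.
  replace s with (t + h) in Hs |- * by (unfold h; ring).
  assert (Hh : h <> 0) by (unfold h; lra).
  assert (Hhd1 : Rabs h < d1) by (eapply Rlt_le_trans; [exact Hst | apply Rmin_l]).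
  assert (Hhd2 : Rabs h * (Rabs l + 1) < eps).
  { apply (Rmult_lt_reg_r (/ (Rabs l + 1))); [apply Rinv_0_lt_compat; lra |].
    rewrite Rmult_assoc, Rinv_r by lra.
    eapply Rlt_le_trans; [rewrite Rmult_1_r; exact Hst | apply Rmin_r]. }
  specialize (Hq h Hh Hs Hhd1).
  set (q := (f (t + h) - f t) / h) in Hq.
  assert (Hq_bound : Rabs q < Rabs l + 1).
  { pose proof (Rabs_triang (q - l) l) as Htri.
    replace (q - l + l) with q in Htri by ring; lra. }
  replace (f (t + h) - f t) with (q * h) by (unfold q; field; exact Hh).
  rewrite Rabs_mult.
  pose proof (Rabs_pos q); pose proof (Rabs_pos h).
  nra.
Qed.

Lemma deriv_within_interior (g : R -> R) (t l : R) : a < t < b ->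
  deriv_within a b f t l -> (forall x, a <= x <= b -> g x = f x) ->
  derivable_pt_lim g t l.
Proof.
  intros Ht Hf Hg eps Heps.
  destruct (deriv_within_eps t l Hf eps Heps) as [d [Hd Hq]].
  assert (Hpos : 0 < Rmin d (Rmin (t - a) (b - t))) by (repeat apply Rmin_glb_lt; lra).
  exists (mkposreal _ Hpos); simpl; intros h Hh Hhd.
  pose proof (Rmin_l d (Rmin (t - a) (b - t))).
  pose proof (Rmin_r d (Rmin (t - a) (b - t))).
  pose proof (Rmin_l (t - a) (b - t)); pose proof (Rmin_r (t - a) (b - t)).
  pose proof (Rle_abs h); pose proof (Rle_abs (- h)); rewrite Rabs_Ropp in *.
  rewrite (Hg (t + h)), (Hg t) by lra.
  apply Hq; lra.
Qed.

End DerivWithin.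

(* Extending a function on [[a, b]] by constants outside turns one-sided
   information at the endpoints into ordinary continuity on all of [R]. *)
Definition clamp (a b x : R) : R := Rmax a (Rmin b x).

Lemma clamp_in (a b x : R) : a <= b -> a <= clamp a b x <= b.
Proof. intros; unfold clamp, Rmax, Rmin; repeat destruct Rle_dec; lra. Qed.

Lemma clamp_id (a b x : R) : a <= x <= b -> clamp a b x = x.
Proof. intros; unfold clamp, Rmax, Rmin; repeat destruct Rle_dec; lra. Qed.

Lemma clamp_lipschitz (a b x y : R) : a <= b ->
  Rabs (clamp a b x - clamp a b y) <= Rabs (x - y).
Proof.
  intros; unfold clamp, Rmax, Rmin, Rabs.
  repeat destruct Rle_dec; repeat destruct Rcase_abs; lra.
Qed.

Lemma continuity_pt_clamp (a b : R) (f f1 : R -> R) (x : R) : a <= b ->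
  (forall t, a <= t <= b -> deriv_within a b f t (f1 t)) ->
  continuity_pt (fun z => f (clamp a b z)) x.
Proof.
  intros Hab Hf eps Heps.
  destruct (deriv_within_continuous a b f _ _ (Hf _ (clamp_in a b x Hab)) eps Heps)
    as [d [Hd Hc]].
  exists d; split; [exact Hd |].
  intros z [_ Hz]; simpl in *; unfold R_dist in *.
  apply Hc; [now apply clamp_in |].
  eapply Rle_lt_trans; [apply clamp_lipschitz; exact Hab | exact Hz].
Qed.

Lemma MVT_open (f df : R -> R) (a b : R) : a < b ->
  (forall x, a < x < b -> derivable_pt_lim f x (df x)) ->
  (forall x, a <= x <= b -> continuity_pt f x) ->
  exists c, a < c < b /\ f b - f a = df c * (b - a).
Proof.
  intros Hab Hd Hc.
  pose (pr := fun c (P : a < c < b) =>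
     exist (fun l => derivable_pt_abs f c l) (df c) (Hd c P) : derivable_pt f c).
  destruct (MVT f id a b pr (fun c _ => derivable_pt_id c) Hab Hc
     (fun c _ => derivable_continuous_pt id c (derivable_pt_id c))) as [c [P E]].
  exists c; split; [exact P |].
  rewrite derive_pt_id in E; simpl in E; unfold id in E; lra.
Qed.

Lemma derivative_nonpos_nonincreasing (f df : R -> R) (a b : R) :
  (forall x, a < x < b -> derivable_pt_lim f x (df x)) ->
  (forall x, a < x < b -> df x <= 0) ->
  forall x y, a < x -> x < y -> y < b -> f y <= f x.
Proof.
  intros Hd Hneg x y Hx Hxy Hy.
  destruct (MVT_cor2 f df x y Hxy) as [c [E Hc]].
  { intros c Hc; apply Hd; lra. }
  specialize (Hneg c ltac:(lra)); nra.
Qed.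

Lemma chord_le_of_derivative_nonincreasing (f df : R -> R) (a b : R) :
  a < b ->
  (forall x, a <= x <= b -> continuity_pt f x) ->
  (forall x, a < x < b -> derivable_pt_lim f x (df x)) ->
  (forall x y, a < x -> x < y -> y < b -> df y <= df x) ->
  forall t, a <= t <= b -> f a * (b - t) + f b * (t - a) <= f t * (b - a).
Proof.
  intros Hab Hc Hd Hmono t Ht.
  destruct (Req_dec t a) as [-> | Hta]; [nra |].
  destruct (Req_dec t b) as [-> | Htb]; [nra |].
  destruct (MVT_open f df a t) as [c1 [Hc1 E1]];
    [lra | intros; apply Hd; lra | intros; apply Hc; lra |].
  destruct (MVT_open f df t b) as [c2 [Hc2 E2]];
    [lra | intros; apply Hd; lra | intros; apply Hc; lra |].
  specialize (Hmono c1 c2 ltac:(lra) ltac:(lra) ltac:(lra)).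
  (* slope on [a, t] >= slope on [t, b], cross-multiplied *)
  assert (Hslopes : (f b - f t) * (t - a) <= (f t - f a) * (b - t))
    by (rewrite E1, E2; assert (0 < (t - a) * (b - t)) by nra; nra).
  lra.
Qed.

Section SecondDerivative.

Variables (a b : R) (f f1 f2 : R -> R).
Hypothesis Hab : a < b.
Hypothesis Hf : forall t, a <= t <= b -> deriv_within a b f t (f1 t).
Hypothesis Hf1 : forall t, a <= t <= b -> deriv_within a b f1 t (f2 t).

Lemma chord_le_of_second_derivative_nonpos :
  (forall x, a < x < b -> f2 x <= 0) ->
  forall t, a <= t <= b -> f a * (b - t) + f b * (t - a) <= f t * (b - a).
Proof.
  intros Hneg t Ht.
  set (fe := fun z => f (clamp a b z)).
  assert (Hfe : forall x, a <= x <= b -> fe x = f x)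
    by (intros x Hx; unfold fe; now rewrite clamp_id).
  rewrite <- !Hfe by lra.
  apply (chord_le_of_derivative_nonincreasing fe f1); auto.
  - intros x _; apply (continuity_pt_clamp a b f f1); [lra | exact Hf].
  - intros x Hx; apply (deriv_within_interior a b f); auto; apply Hf; lra.
  - apply (derivative_nonpos_nonincreasing f1 f2); [| exact Hneg].
    intros x Hx; apply (deriv_within_interior a b f1); auto; apply Hf1; lra.
Qed.

End SecondDerivative.

Lemma ex_RInt_deriv_within (a b : R) (f f1 : R -> R) :
  a <= b -> (forall t, a <= t <= b -> deriv_within a b f t (f1 t)) ->
  forall c d, a <= c <= d -> d <= b -> ex_RInt f c d.
Proof.
  intros Hab Hf c d Hc Hd.
  apply (ex_RInt_ext (fun z => f (clamp a b z))).
  - intros x Hx; rewrite Rmin_left, Rmax_right in Hx by lra; apply f_equal, clamp_id; lra.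
  - apply (@ex_RInt_continuous R_CompleteNormedModule); intros z _.
    apply continuity_pt_filterlim, (continuity_pt_clamp a b f f1); assumption.
Qed.

Lemma RInt_affine (c s e : R) : RInt (fun x => c + s * x) 0 e = c * e + s * e ^ 2 / 2.
Proof.
  apply is_RInt_unique.
  pose proof (is_RInt_derive (fun x => c * x + s * x ^ 2 / 2) (fun x => c + s * x) 0 e)
    as Hftc.
  match type of Hftc with _ -> _ -> is_RInt _ _ _ ?v =>
    replace (c * e + s * e ^ 2 / 2) with v by (unfold minus, plus, opp; simpl; field) end.
  apply Hftc.
  - intros x _; auto_derive; [easy | field].
  - intros x _; apply continuity_pt_filterlim; reg.
Qed.

(* With [a = u 0], [b = u T], [v = u eta] and [I = RInt u 0 eta], the
   hypotheses [Hv] and [HI] are the chord bounds at [eta] and on [[0, eta]]. *)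
Lemma boundary_values_nonneg (T eta alpha beta a b v I : R) :
  0 < T -> 0 < eta -> eta < T ->
  0 < alpha -> alpha < 2 * T / (eta ^ 2) ->
  0 <= beta ->
  beta < (2 * T - alpha * eta ^ 2) / (alpha * eta ^ 2 - 2 * eta + 2 * T) ->
  T * v >= T * a + (b - a) * eta ->
  2 * T * I >= 2 * T * a * eta + (b - a) * eta ^ 2 ->
  a = beta * v -> b = alpha * I ->
  0 <= a /\ 0 <= b.
Proof.
  intros HT He HeT Ha Ha2 Hb Hb2 Hv HI Ha_def Hb_def.
  set (k := 2 * T - alpha * eta ^ 2) in *.
  set (D := alpha * eta ^ 2 - 2 * eta + 2 * T) in *.
  assert (He2 : 0 < eta ^ 2) by (apply pow_lt; lra).
  assert (Hk : 0 < k).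
  { apply (Rmult_lt_compat_r (eta ^ 2)) in Ha2; [| lra].
    unfold Rdiv in Ha2; rewrite Rmult_assoc, Rinv_l in Ha2; unfold k; lra. }
  assert (HD : 0 < D) by (unfold D; nra).
  assert (HbD : beta * D < k).
  { apply (Rmult_lt_compat_r D) in Hb2; [| lra].
    unfold Rdiv in Hb2; rewrite Rmult_assoc, Rinv_l in Hb2; lra. }
  assert (Hbk : b * k >= alpha * a * eta * (2 * T - eta)).
  { assert (alpha * (2 * T * I) >= alpha * (2 * T * a * eta + (b - a) * eta ^ 2))
      by (apply Rle_ge, Rmult_le_compat_l; lra).
    unfold k; nra. }
  assert (Ha0 : 0 <= a).
  { apply Rnot_lt_le; intro Hneg.
    assert (beta * k * (T * v) >= beta * k * (T * a + (b - a) * eta))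
      by (apply Rle_ge, Rmult_le_compat_l; nra).
    assert (beta * eta * (b * k) >= beta * eta * (alpha * a * eta * (2 * T - eta)))
      by (apply Rle_ge, Rmult_le_compat_l; nra).
    assert (Hlin : T * (k - beta * D) * a >= 0)
      by (unfold k, D in *; rewrite Ha_def at 1; nra).
    assert (0 < T * (k - beta * D)) by (apply Rmult_lt_0_compat; lra).
    nra. }
  split; [exact Ha0 |].
  assert (0 <= alpha * a * eta * (2 * T - eta))
    by (repeat apply Rmult_le_pos; nra).
  nra.
Qed.

Theorem lemma2p2 (T eta alpha beta : R) (y u u1 u2 : R -> R) :
  0 < T -> 0 < eta -> eta < T ->
  0 < alpha -> alpha < 2 * T / (eta ^ 2) ->
  0 <= beta ->
  beta < (2 * T - alpha * eta ^ 2) / (alpha * eta ^ 2 - 2 * eta + 2 * T) ->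
  C0_on 0 T y -> (forall t, 0 <= t <= T -> 0 <= y t) ->
  C2_on_with 0 T u u1 u2 ->
  (forall t, 0 < t < T -> u2 t + y t = 0) ->
  u 0 = beta * u eta ->
  u T = alpha * RInt u 0 eta ->
  forall t, 0 <= t <= T -> 0 <= u t.
Proof.
  intros HT He HeT Ha Ha2 Hb Hb2 _ Hy [Hd1 [Hd2 _]] Heq Hu0 HuT.
  assert (Hchord : forall t, 0 <= t <= T -> u 0 * (T - t) + u T * t <= u t * T).
  { intros t Ht; replace t with (t - 0) at 2 by ring; replace T with (T - 0) at 3 by ring.
    apply (chord_le_of_second_derivative_nonpos 0 T u u1 u2); auto.
    intros x Hx; specialize (Heq x Hx); specialize (Hy x ltac:(lra)); lra. }
  set (s := (u T - u 0) / T).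
  assert (HsT : s * T = u T - u 0) by (unfold s; field; lra).
  assert (Hchord_s : forall t, 0 <= t <= T -> u 0 + s * t <= u t).
  { intros t Ht; specialize (Hchord t Ht); apply (Rmult_le_reg_r T); nra. }
  assert (HI : u 0 * eta + s * eta ^ 2 / 2 <= RInt u 0 eta).
  { rewrite <- RInt_affine; apply RInt_le; [lra | | | intros x Hx; apply Hchord_s; lra].
    - apply (@ex_RInt_continuous R_CompleteNormedModule).
      intros z _; apply continuity_pt_filterlim; reg.
    - apply (ex_RInt_deriv_within 0 T u u1); auto; lra. }
  destruct (boundary_values_nonneg T eta alpha beta (u 0) (u T) (u eta) (RInt u 0 eta))
    as [Ha0 Hb0]; auto.
  - specialize (Hchord_s eta ltac:(lra)); nra.
  - rewrite <- HsT; nra.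
  - intros t Ht; specialize (Hchord t Ht); nra.
Qed.
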